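(* In the finite-horizon reinsurance model of the context, define non-negative coefficients recursively by $a_{N-1}=1$, $a_n=1+\beta a_{n+1}$; $\underline c_{N-1}=\operatorname{ess\,sup}(Z_N)$, $\underline c_n=(1+\beta a_{n+1})\operatorname{ess\,sup}(Z_{n+1})+\beta\underline c_{n+1}$; $\bar c_{N-1}=\rho_{N-1}(Y_N)+\pi_{R,N-1}(Y_N)$, $\bar c_n=\rho_n\big((1+\beta a_{n+1})Y_{n+1}\big)+(1+\beta a_{n+1})\pi_{R,n}(Y_{n+1})+\beta\bar c_{n+1}$, for $n=N-2,\dots,0$, and the decreasing functions $\underline b_n(x)=-\underline c_n-a_nx^+$, $\bar b_n(x)=\bar c_n+a_nx^-$. Then for every policy $\pi\in\Pi$, every $n=0,\dots,N-1$ and every history $h_n=(x_0,f_0,\dots,x_n)\in\mathcal H_n$, $$\underline b_n(x_n)\le V_{n\pi}(h_n)\le \bar b_n(x_n).$$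
   Context: Probability space $(\Omega,\mathcal A,\mathbb P)$, $p\in[1,\infty)$, $L^p$ real random variables with finite $p$-th moment, $L^p_+$ the nonnegative ones; positive values are losses. For a map $\rho:L^p\to\bar{\mathbb R}$ (risk measure) or $\pi:L^p_+\to\bar{\mathbb R}$ (premium principle): law-invariant means equal values for equally distributed arguments; monotone means $X\le X'$ a.s. implies $\rho(X)\le\rho(X')$; translation invariant means $\rho(X+c)=\rho(X)+c$ for $c\in\mathbb R$; normalized means $\rho(0)=0$; monetary means monotone and translation invariant; Fatou property means: $X_k\to X$ a.s., $X_k,X\in L^p$, $|X_k|\le W$ a.s. for some $W\in L^p$ imply $\liminf_k\rho(X_k)\ge\rho(X)$. $\mathcal F=\{f:\mathbb R_+\to\mathbb R_+ : f(t)\le t\ \forall t,\ f\text{ increasing},\ \mathrm{id}_{\mathbb R_+}-f\text{ increasing}\}$ with the metric of compact convergence. Finite-horizon model: horizon $N\in\mathbb N$, discount factor $\beta\in(0,1]$; $(Y_n,Z_n)_{n\ge1}$ an independent sequence of random vectors with $Y_n\in L^p_+$ (claims) and $Z_n\in L^\infty_+$ (premium income). For $n=0,\dots,N-1$: $\pi_{R,n}:L^p_+\to\bar{\mathbb R}$ is a law-invariant, monotone, normalized premium principle with the Fatou property and $\pi_{R,n}(Y_{n+1})<\infty$, and $\pi_{R,n}(f):=\pi_{R,n}(Y_{n+1}-f(Y_{n+1}))$ for $f\in\mathcal F$; $\rho_n:L^p\to\bar{\mathbb R}$ is a law-invariant, normalized monetary risk measure with the Fatou property such that $\rho_n(\lambda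 Y_{n+1})<\infty$ for all $\lambda\ge0$. Admissible actions $D_n(x)$ are either $\mathcal F$ for all $x$ (unconstrained) or $\{f\in\mathcal F:\pi_{R,n}(f)\le x^+\}$ (budget-constrained). Histories: $\mathcal H_0=\mathbb R$, $\mathcal H_n$ is the set of $h_n=(x_0,f_0,x_1,\dots,f_{n-1},x_n)$ with $x_k\in\mathbb R$, $f_k\in D_k(x_k)$. A policy $\pi=(d_0,\dots,d_{N-1})\in\Pi$ consists of measurable $d_n:\mathcal H_n\to\mathcal F$ with $d_n(h_n)\in D_n(x_n)$. Policy values: $V_{N\pi}\equiv0$ and $$V_{n\pi}(h_n)=\rho_n\Big(d_n(h_n)(Y_{n+1})+\pi_{R,n}(d_n(h_n))-Z_{n+1}-x_n+\beta V_{n+1,\pi}\big(h_n,d_n(h_n),x_n+Z_{n+1}-d_n(h_n)(Y_{n+1})-\pi_{R,n}(d_n(h_n))\big)\Big).$$ Standing assumption: the risk measures are such that all policy values are measurable functions of the history (so that the arguments of $\rho_n$ are random variables). $\operatorname{ess\,sup}$ denotes the essential supremum. *)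

From HB Require Import structures.
From mathcomp Require Import all_boot all_order all_algebra.
From mathcomp Require Import all_classical all_reals all_analysis.
From mathcomp Require Import ess_sup_inf.
Set Implicit Arguments. Unset Strict Implicit. Unset Printing Implicit Defensive.
Import Order.TTheory GRing.Theory Num.Theory Num.Def.
Import numFieldNormedType.Exports.
Local Open Scope classical_set_scope.
Local Open Scope ring_scope.

Definition Lp d (T : measurableType d) (R : realType) (P : probability T R)
  (p : R) (X : T -> R) : Prop :=
  measurable_fun setT X /\ (\int[P]_w ((`|X w| `^ p)%:E) < +oo)%E.

Definition Lp_plus d (T : measurableType d) (R : realType) (P : probability T R)
  (p : R) (X : T -> R) : Prop :=
  Lp P p X /\ {ae P, forall w, 0 <= X w}.

Definition Linf_plus d (T : measurableType d) (R : realType) (P : probability T R)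
  (Z : T -> R) : Prop :=
  [/\ measurable_fun setT Z, (exists M : R, {ae P, forall w, `|Z w| <= M})
    & {ae P, forall w, 0 <= Z w}].

Definition same_law d (T : measurableType d) (R : realType) (P : probability T R)
  (X X' : T -> R) : Prop :=
  forall B : set R, measurable B -> P (X @^-1` B) = P (X' @^-1` B).

Definition law_invariant d (T : measurableType d) (R : realType) (P : probability T R)
  (dom : (T -> R) -> Prop) (rho : (T -> R) -> \bar R) : Prop :=
  forall X X', dom X -> dom X' -> same_law P X X' -> rho X = rho X'.

Definition monotone_on d (T : measurableType d) (R : realType) (P : probability T R)
  (dom : (T -> R) -> Prop) (rho : (T -> R) -> \bar R) : Prop :=
  forall X X', dom X -> dom X' -> {ae P, forall w, X w <= X' w} ->
    (rho X <= rho X')%E.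

Definition translation_invariant d (T : measurableType d) (R : realType)
  (P : probability T R) (p : R) (rho : (T -> R) -> \bar R) : Prop :=
  forall (X : T -> R) (c : R), Lp P p X ->
    rho (fun w => X w + c) = (rho X + c%:E)%E.

Definition normalized (T : Type) (R : realType) (rho : (T -> R) -> \bar R) : Prop :=
  rho (fun _ => 0) = 0%E.

Definition fatou_property d (T : measurableType d) (R : realType) (P : probability T R)
  (p : R) (dom : (T -> R) -> Prop) (rho : (T -> R) -> \bar R) : Prop :=
  forall (Xk : nat -> T -> R) (X W : T -> R),
    (forall k, dom (Xk k)) -> dom X -> Lp P p W ->
    {ae P, forall w, (fun k => Xk k w) @ \oo --> X w} ->
    (forall k, {ae P, forall w, `|Xk k w| <= W w}) ->
    (rho X <= limn_einf (fun k => rho (Xk k)))%E.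

Definition risk_measure d (T : measurableType d) (R : realType) (P : probability T R)
  (p : R) (rho : (T -> R) -> \bar R) : Prop :=
  [/\ law_invariant P (Lp P p) rho, monotone_on P (Lp P p) rho,
      translation_invariant P p rho, normalized rho
    & fatou_property P p (Lp P p) rho].

Definition premium_principle d (T : measurableType d) (R : realType)
  (P : probability T R) (p : R) (pi : (T -> R) -> \bar R) : Prop :=
  [/\ law_invariant P (Lp_plus P p) pi, monotone_on P (Lp_plus P p) pi,
      normalized pi & fatou_property P p (Lp_plus P p) pi].

Definition indep_seq d (T : measurableType d) (R : realType) (P : probability T R)
  (Y Z : nat -> T -> R) : Prop :=
  forall (J : seq nat) (B : nat -> set (R * R)),
    uniq J -> all (fun j => 0 < j)%N J -> (forall j, measurable (B j)) ->
    P (\bigcap_(j in [set` J]) ((fun w => (Y j w, Z j w)) @^-1` B j)) =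
    (\prod_(j <- J) P ((fun w => (Y j w, Z j w)) @^-1` B j))%E.

(* A retention function f : R_+ -> R_+ is represented by a function R -> R,
   fixed to 0 on the negative reals (so that F is in bijection with the
   paper's set of functions on R_+). *)
Definition inF (R : realType) (f : R -> R) : Prop :=
  [/\ forall t, 0 <= t -> 0 <= f t <= t,
      forall t, t < 0 -> f t = 0,
      {in `[0, +oo[ &, {homo f : s t / s <= t}}
    & {in `[0, +oo[ &, {homo (fun t => t - f t) : s t / s <= t}}].

Definition piR (T : Type) (R : realType) (pi : nat -> (T -> R) -> \bar R)
  (Y : nat -> T -> R) (n : nat) (f : R -> R) : \bar R :=
  pi n (fun w => Y n.+1 w - f (Y n.+1 w)).

(* admissible actions D_n(x): budget = false (unconstrained) or
   budget = true ({f in F | pi_{R,n}(f) <= x^+}) *)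
Definition Dadm (T : Type) (R : realType) (pi : nat -> (T -> R) -> \bar R)
  (Y : nat -> T -> R) (budget : bool) (n : nat) (x : R) (f : R -> R) : Prop :=
  inF f /\ (budget -> (piR pi Y n f <= (Num.max x 0)%:E)%E).

(* A history h_n = (x_0, f_0, ..., x_{n-1}, f_{n-1}, x_n) is represented by the
   sequence h = [:: (x_0,f_0); ...; (x_{n-1},f_{n-1})] together with x_n. *)
Definition hist (R : realType) := seq (R * (R -> R)).

Definition valid_hist (T : Type) (R : realType) (pi : nat -> (T -> R) -> \bar R)
  (Y : nat -> T -> R) (budget : bool) (n : nat) (h : hist R) : Prop :=
  size h = n /\
  forall k, (k < n)%N ->
    Dadm pi Y budget k (nth (0, fun _ => 0) h k).1 (nth (0, fun _ => 0) h k).2.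

(* policy (d_0, ..., d_{N-1}); d n h x = d_n(h_n) *)
Definition policy (R : realType) := nat -> hist R -> R -> (R -> R).

Definition admissible_policy (T : Type) (R : realType)
  (pi : nat -> (T -> R) -> \bar R) (Y : nat -> T -> R) (budget : bool) (N : nat)
  (dp : policy R) : Prop :=
  forall n (h : hist R) (x : R), (n < N)%N -> valid_hist pi Y budget n h ->
    Dadm pi Y budget n x (dp n h x).

(* Vrec k n h x = V_{n,pi}(h_n) when k = N - n steps remain.  The real numbers
   pi_{R,n}(f) and V_{n+1,pi}(...) enter the argument of rho_n through [fine]
   (they are finite). *)
Fixpoint Vrec (T : Type) (R : realType) (rho pi : nat -> (T -> R) -> \bar R)
  (Y Z : nat -> T -> R) (beta : R) (dp : policy R)
  (k n : nat) (h : hist R) (x : R) {struct k} : \bar R :=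
  match k with
  | 0 => 0%E
  | k'.+1 =>
      let f := dp n h x in
      let c := fine (piR pi Y n f) in
      rho n (fun w =>
        f (Y n.+1 w) + c - Z n.+1 w - x
        + beta * fine (Vrec rho pi Y Z beta dp k' n.+1 (rcons h (x, f))
                         (x + Z n.+1 w - f (Y n.+1 w) - c)))
  end.

Definition Vpol (T : Type) (R : realType) (rho pi : nat -> (T -> R) -> \bar R)
  (Y Z : nat -> T -> R) (beta : R) (dp : policy R) (N n : nat) (h : hist R)
  (x : R) : \bar R :=
  Vrec rho pi Y Z beta dp (N - n) n h x.

Definition Varg (T : Type) (R : realType) (rho pi : nat -> (T -> R) -> \bar R)
  (Y Z : nat -> T -> R) (beta : R) (dp : policy R) (N n : nat) (h : hist R)
  (x : R) : T -> R :=
  let f := dp n h x in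
  let c := fine (piR pi Y n f) in
  fun w => f (Y n.+1 w) + c - Z n.+1 w - x
    + beta * fine (Vpol rho pi Y Z beta dp N n.+1 (rcons h (x, f))
                     (x + Z n.+1 w - f (Y n.+1 w) - c)).

(* Extending the
   coefficients by zero at the horizon N (where V_N = 0), every stage n < N
   obeys the same recursion, with A = beta a_{n+1}:
     a_n = 1 + A,  cl_n = (1 + A) esssup Z_{n+1} + beta cl_{n+1},
     cb_n = rho_n((1 + A) Y_{n+1}) + (1 + A) pi_n(Y_{n+1}) + beta cb_{n+1}.
   The heart of the argument is a one-step lemma: if the discounted
   continuation value g(x') is squeezed between -L - A x'^+ and U + A x'^-,
   then the one-period loss f(Y) + pi_R(f) - Z - x + g(x + Z - f(Y) - pi_R(f))
   lies a.s. between the constant -(1 + A) M - L - (1 + A) x^+ (M bounding Z)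
   and (1 + A) Y plus a constant; monotonicity and translation invariance of
   rho_n turn this into the bounds of the earlier stage. *)
From HB Require Import structures.
From mathcomp Require Import all_boot all_order all_algebra.
From mathcomp Require Import all_classical all_reals all_analysis.
From mathcomp Require Import ess_sup_inf.
From mathcomp Require Import ring lra measurable_realfun.
Import Order.TTheory GRing.Theory Num.Theory Num.Def.
Import numFieldNormedType.Exports.
Local Open Scope classical_set_scope.
Local Open Scope ring_scope.
Set Implicit Arguments. Unset Strict Implicit.

Lemma powRD_le (R : realType) (u v p : R) : 0 <= u -> 0 <= v -> 0 <= p ->
  (u + v) `^ p <= 2 `^ p * (u `^ p + v `^ p).
Proof.
move=> u0 v0 p0.
have sum_le : u + v <= 2 * Num.max u v.
  have : u <= Num.max u v by rewrite le_max lexx.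
  have : v <= Num.max u v by rewrite le_max lexx orbT.
  lra.
have max0 : 0 <= Num.max u v by rewrite le_max u0.
apply: (le_trans (ge0_ler_powR p0 _ _ sum_le)); rewrite ?nnegrE ?addr_ge0 ?mulr_ge0 //.
rewrite powRM //; apply: ler_wpM2l; first exact: powR_ge0.
by rewrite /Num.max; case: ifP => _; rewrite ?lerDr ?lerDl powR_ge0.
Qed.

Section LpSpace.
Context d (T : measurableType d) (R : realType) (P : probability T R) (p : R).
Hypothesis p_ge0 : 0 <= p.

Lemma measurable_norm_powR (W : T -> R) : measurable_fun setT W ->
  measurable_fun setT (EFin \o (fun w => `|W w| `^ p) : T -> \bar R).
Proof.
move=> mW; apply/measurable_EFinP.
exact: measurableT_comp (@measurable_powR R p) (measurableT_comp (@normr_measurable R setT) mW).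
Qed.

(* A measurable X dominated a.s. by an affine function k |Y| + D of some Y in
   L^p is itself in L^p (P is a probability, so constants are integrable). *)
Lemma Lp_dominated (X Y : T -> R) (k D : R) : 0 <= k -> 0 <= D ->
  measurable_fun setT X -> Lp P p Y ->
  {ae P, forall w, `|X w| <= k * `|Y w| + D} -> Lp P p X.
Proof.
move=> k0 D0 mX [mY iY] dom; split; first exact: mX.
have mXp := measurable_norm_powR mX; have mYp := measurable_norm_powR mY.
pose c1 := 2 `^ p * k `^ p; pose c2 := 2 `^ p * D `^ p.
have c10 : 0 <= c1 by rewrite mulr_ge0 ?powR_ge0.
have c20 : 0 <= c2 by rewrite mulr_ge0 ?powR_ge0.
apply: (le_lt_trans (y := (\int[P]_w ((c1%:E * (`|Y w| `^ p)%:E) + c2%:E))%E)).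
  apply: ae_ge0_le_integral => //.
  - by move=> w _; rewrite adde_ge0 ?mule_ge0 ?lee_fin ?powR_ge0.
  - by apply: emeasurable_funD => //; exact: emeasurable_funM.
  - apply: filterS dom => w /= Xw _; rewrite -EFinM -EFinD lee_fin.
    have pow_le : `|X w| `^ p <= (k * `|Y w| + D) `^ p.
      by apply: ge0_ler_powR; rewrite ?nnegrE ?addr_ge0 ?mulr_ge0.
    have := @powRD_le R (k * `|Y w|) D p (mulr_ge0 k0 (normr_ge0 _)) D0 p_ge0.
    rewrite powRM // => sum_le.
    have -> : c1 * `|Y w| `^ p + c2 = 2 `^ p * (k `^ p * `|Y w| `^ p + D `^ p).
      by rewrite /c1 /c2; ring.
    exact: le_trans pow_le sum_le.
rewrite ge0_integralD //; first rewrite ge0_integralZl //.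
all: try by move=> w _; apply: mule_ge0; [exact: c10|exact: powR_ge0].
all: try by apply: emeasurable_funM.
rewrite integral_cst // lte_add_pinfty // lte_mul_pinfty // ?lee_fin //.
by apply: (le_lt_trans (probability_le1 _ _)); rewrite ?ltry.
Qed.

Lemma Lp_cst (K : R) : Lp P p (fun _ => K).
Proof.
split; first exact: measurable_cst.
rewrite integral_cst // lte_mul_pinfty ?lee_fin ?powR_ge0 //.
by apply: (le_lt_trans (probability_le1 _ _)); rewrite ?ltry.
Qed.

Lemma Lp_affine (Y : T -> R) (k K : R) : 0 <= k -> Lp P p Y ->
  Lp P p (fun w => k * Y w + K).
Proof.
move=> k0 LY; apply: (@Lp_dominated _ Y k `|K|) => //.
  by apply: measurable_funD => //; apply: measurable_funM => //; case: LY.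
apply: nearW => w; rewrite (le_trans (ler_normD _ _)) // normrM ger0_norm //.
Qed.

Lemma Lp_scale (Y : T -> R) (k : R) : 0 <= k -> Lp P p Y -> Lp P p (fun w => k * Y w).
Proof.
move=> k0 /(Lp_affine 0 k0); congr Lp; apply: funext => w; exact: addr0.
Qed.

End LpSpace.

Section RetentionFunctions.
Context (R : realType) (f : R -> R).
Hypothesis f_inF : inF f.

Lemma inF_ge0 t : 0 <= f t.
Proof.
have [bnd neg _ _] := f_inF; have [t0|t0] := ltP t 0; first by rewrite neg.
by case/andP: (bnd t t0).
Qed.

Lemma inF_le t : 0 <= t -> f t <= t.
Proof. by have [bnd _ _ _] := f_inF => t0; case/andP: (bnd t t0). Qed.

(* f is nondecreasing on all of R, hence Borel measurable. *)
Lemma inF_measurable : measurable_fun setT f.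
Proof.
apply: nondecreasing_measurable => // s t st.
have [_ neg homo _] := f_inF.
have [s0|s0] := ltP s 0; first by rewrite (neg s s0) inF_ge0.
by apply: homo; rewrite // in_itv /= andbT // (le_trans s0 st).
Qed.

End RetentionFunctions.

Section RiskFunctionals.
Context d (T : measurableType d) (R : realType) (P : probability T R) (p : R).
Hypothesis p_ge0 : 0 <= p.

(* A normalized, translation invariant risk measure is the identity on
   constants. *)
Lemma risk_measure_cst (rho0 : (T -> R) -> \bar R) (K : R) :
  risk_measure P p rho0 -> rho0 (fun _ => K) = K%:E.
Proof.
move=> [_ _ transl norm _].
have := transl (fun _ => 0) K (Lp_cst P p 0).
rewrite norm add0e => <-; congr rho0; apply: funext => w; by rewrite add0r.
Qed.

(* rho(k Y) is a real number when it is < +oo, for k >= 0 and Y >= 0: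
   monotonicity and normalization give rho(k Y) >= rho(0) = 0. *)
Lemma risk_measure_scaled_real (rho0 : (T -> R) -> \bar R) (Y : T -> R) (k : R) :
  risk_measure P p rho0 -> Lp_plus P p Y -> 0 <= k ->
  (rho0 (fun w => (k * Y w)%R) < +oo)%E -> exists r, rho0 (fun w => (k * Y w)%R) = r%:E.
Proof.
move=> [_ mon _ norm _] [LY Y0] k0 lt.
have rho_ge0 : (0 <= rho0 (fun w => (k * Y w)%R))%E.
  rewrite -norm; apply: mon (Lp_cst P p 0) (Lp_scale p_ge0 k0 LY) _.
  by apply: filterS Y0 => w Yw; rewrite mulr_ge0.
by exists (fine (rho0 (fun w => (k * Y w)%R))); rewrite fineK // ge0_fin_numE.
Qed.

(* Likewise a finite premium pi(Y) is real, being >= pi(0) = 0. *)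
Lemma premium_real (pi0 : (T -> R) -> \bar R) (Y : T -> R) :
  premium_principle P p pi0 -> Lp_plus P p Y -> (pi0 Y < +oo)%E ->
  exists pY, pi0 Y = pY%:E.
Proof.
move=> [_ mon norm _] [LY Y0] lt.
have L0 : Lp_plus P p (fun _ => 0) by split; [exact: Lp_cst | exact: nearW].
have pi_ge0 : (0 <= pi0 Y)%E by rewrite -norm; exact: mon L0 (conj LY Y0) Y0.
by exists (fine (pi0 Y)); rewrite fineK // ge0_fin_numE.
Qed.

Lemma premium_ceded_bounds (pi0 : (T -> R) -> \bar R) (Y : T -> R) (f : R -> R)
    (pY : R) :
  premium_principle P p pi0 -> Lp_plus P p Y -> inF f -> pi0 Y = pY%:E ->
  0 <= fine (pi0 (fun w => Y w - f (Y w))) <= pY.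
Proof.
move=> [_ mon norm _] [LY Y0] f_inF piY.
have L0 : Lp_plus P p (fun _ => 0) by split; [exact: Lp_cst | exact: nearW].
have ceded_ge0 : {ae P, forall w, 0 <= Y w - f (Y w)}.
  by apply: filterS Y0 => w Yw; rewrite subr_ge0 inF_le.
have Lceded : Lp_plus P p (fun w => Y w - f (Y w)).
  split => //; apply: (Lp_dominated p_ge0 (Y := Y) (k := 1) (D := 0)) => //.
    have mY : measurable_fun setT Y by case: LY.
    exact: measurable_funB mY (measurableT_comp (inF_measurable f_inF) mY).
  apply: nearW => w; rewrite mul1r addr0.
  have [Yw0|Yw0] := lerP 0 (Y w).
    have := inF_ge0 f_inF (Y w); have := inF_le f_inF Yw0.
    rewrite (ger0_norm Yw0) => h1 h2; rewrite ger0_norm; lra.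
  by have [_ neg _ _] := f_inF; rewrite neg // subr0.
have lo : (0 <= pi0 (fun w => (Y w - f (Y w))%R))%E by rewrite -norm; exact: mon.
have up : (pi0 (fun w => (Y w - f (Y w))%R) <= pY%:E)%E.
  rewrite -piY; apply: mon Lceded (conj LY Y0) _.
  by apply: nearW => w; have := inF_ge0 f_inF (Y w); lra.
have fin : pi0 (fun w => (Y w - f (Y w))%R) \is a fin_num.
  by rewrite ge0_fin_numE // (le_lt_trans up) ?ltry.
by rewrite fine_ge0 //= -lee_fin fineK.
Qed.

Lemma ess_sup_real (Z : T -> R) : Linf_plus P Z ->
  exists M, ess_sup P (fun w => (Z w)%:E) = M%:E /\ {ae P, forall w, Z w <= M}.
Proof.
case=> _ [B ZB] Z0.
have P_pos : (0 < P [set: T])%E by rewrite probability_setT.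
have sup_ge0 : (0 <= ess_sup P (fun w => (Z w)%:E))%E by exact: ess_sup_gee.
have sup_leB : (ess_sup P (fun w => (Z w)%:E) <= B%:E)%E.
  by apply/ess_supP; apply: filterS ZB => w h; rewrite lee_fin (le_trans (ler_norm _) h).
have fin : ess_sup P (fun w => (Z w)%:E) \is a fin_num.
  by rewrite ge0_fin_numE // (le_lt_trans sup_leB) ?ltry.
exists (fine (ess_sup P (fun w => (Z w)%:E))); split; first by rewrite fineK.
apply: filterS (ess_sup_ge P (fun w => (Z w)%:E)) => w.
by rewrite -lee_fin fineK.
Qed.

End RiskFunctionals.

Lemma one_step_pointwise (R : realType) (f : R -> R) (y z c pY M A L U x g' : R) :
  inF f -> 0 <= y -> 0 <= z <= M -> 0 <= c <= pY -> 0 <= A ->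
  - L - A * Num.max (x + z - f y - c) 0 <= g' <= U + A * Num.max (- (x + z - f y - c)) 0 ->
  - ((1 + A) * M + L) - (1 + A) * Num.max x 0 <= f y + c - z - x + g' <=
    (1 + A) * y + ((1 + A) * pY + U + (1 + A) * Num.max (- x) 0).
Proof.
move=> f_inF y0 /andP[z0 zM] /andP[c0 cpY] A0 /andP[g_lo g_up].
have fy0 := inF_ge0 f_inF y; have fyy := inF_le f_inF y0.
have [xp_ge xp0] : x <= Num.max x 0 /\ 0 <= Num.max x 0 by rewrite !le_max !lexx orbT.
have [xn_ge xn0] : - x <= Num.max (- x) 0 /\ 0 <= Num.max (- x) 0 by rewrite !le_max !lexx orbT.
(* the positive part grows by at most the income z, the negative part by at
   most the outflow f(y) + c *)
have pos_le : Num.max (x + z - f y - c) 0 <= Num.max x 0 + z.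
  by rewrite ge_max; apply/andP; split; lra.
have neg_le : Num.max (- (x + z - f y - c)) 0 <= Num.max (- x) 0 + f y + c.
  by rewrite ge_max; apply/andP; split; lra.
have := ler_wpM2l A0 pos_le; have := ler_wpM2l A0 neg_le.
have := ler_wpM2l A0 zM; have := ler_wpM2l A0 fyy; have := ler_wpM2l A0 cpY.
have := mulr_ge0 A0 xp0.
move=> *; apply/andP; split; nra.
Qed.

Section OneStep.
Context d (T : measurableType d) (R : realType) (P : probability T R) (p : R).
Hypothesis p_ge0 : 0 <= p.

Definition one_step_loss (f g : R -> R) (c : R) (Y Z : T -> R) (x : R) : T -> R :=
  fun w => f (Y w) + c - Z w - x + g (x + Z w - f (Y w) - c).

(* The one-period loss is squeezed a.s. between a constant and (1 + A) Y plus
   a constant, so monotonicity and translation invariance of rho bound it. *)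
Lemma one_step_bound (rho0 : (T -> R) -> \bar R) (Y Z : T -> R) (f g : R -> R)
    (c pY M A L U x : R) :
  risk_measure P p rho0 -> Lp_plus P p Y ->
  {ae P, forall w, 0 <= Z w} -> {ae P, forall w, Z w <= M} ->
  inF f -> 0 <= c <= pY -> 0 <= A ->
  (forall x', - L - A * Num.max x' 0 <= g x' <= U + A * Num.max (- x') 0) ->
  measurable_fun setT (one_step_loss f g c Y Z x) ->
  ((- ((1 + A) * M + L) - (1 + A) * Num.max x 0)%:E <= rho0 (one_step_loss f g c Y Z x))%E /\
  (rho0 (one_step_loss f g c Y Z x) <=
     rho0 (fun w => ((1 + A) * Y w)%R) + ((1 + A) * pY + U + (1 + A) * Num.max (- x) 0)%:E)%E.
Proof.
move=> rho_rm [LY Y0] Z0 ZM f_inF c_bnd A0 g_bnd mX.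
set X := one_step_loss f g c Y Z x.
set lo := - ((1 + A) * M + L) - (1 + A) * Num.max x 0.
set K := (1 + A) * pY + U + (1 + A) * Num.max (- x) 0.
have A1 : 0 <= 1 + A by lra.
have X_bnd : {ae P, forall w, lo <= X w <= (1 + A) * Y w + K}.
  apply: filterS3 Y0 Z0 ZM => w Yw Zw ZwM.
  by apply: one_step_pointwise => //; rewrite ?Zw.
have LX : Lp P p X.
  apply: (Lp_dominated p_ge0 (Y := Y) (k := 1 + A) (D := `|K| + `|lo|));
    rewrite ?addr_ge0 //.
  apply: filterS2 X_bnd Y0 => w /andP[Xlo Xup] Yw.
  have := mulr_ge0 A1 Yw; have := normr_ge0 K; have := normr_ge0 lo.
  have := ler_norm K; have := ler_norm (- lo).
  rewrite normrN (ger0_norm Yw) ler_norml => *; apply/andP; split; lra.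
have [_ mon transl _ _] := rho_rm.
split.
  rewrite -(risk_measure_cst lo rho_rm).
  by apply: mon (Lp_cst P p lo) LX _; apply: filterS X_bnd => w /andP[].
rewrite -(transl _ _ (Lp_scale p_ge0 A1 LY)).
apply: mon LX (Lp_affine p_ge0 K A1 LY) _.
by apply: filterS X_bnd => w /andP[].
Qed.

End OneStep.

Lemma fine_between (R : realType) (lo up : R) (v : \bar R) :
  (lo%:E <= v)%E -> (v <= up%:E)%E -> lo <= fine v <= up.
Proof. by case: v => [r| |] //=; rewrite !lee_fin => -> ->. Qed.

Lemma Vpol_unfold (T : Type) (R : realType) (rho pi : nat -> (T -> R) -> \bar R)
    (Y Z : nat -> T -> R) (beta : R) (dp : policy R) (N n : nat) (h : hist R) (x : R) :
  (n < N)%N -> Vpol rho pi Y Z beta dp N n h x = rho n (Varg rho pi Y Z beta dp N n h x).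
Proof. by move=> nN; rewrite /Vpol -subnSK. Qed.

Lemma valid_rcons (T : Type) (R : realType) (pi : nat -> (T -> R) -> \bar R)
    (Y : nat -> T -> R) (budget : bool) (n : nat) (h : hist R) (x : R) (f : R -> R) :
  valid_hist pi Y budget n h -> Dadm pi Y budget n x f ->
  valid_hist pi Y budget n.+1 (rcons h (x, f)).
Proof.
move=> [size_h adm_h] adm_f; split; first by rewrite size_rcons size_h.
move=> k; rewrite ltnS leq_eqVlt nth_rcons size_h => /orP[/eqP->|kn].
  by rewrite ltnn eqxx.
by rewrite kn; exact: adm_h.
Qed.

Section Model.
Context d (T : measurableType d) (R : realType) (P : probability T R) (p : R).
Context (N : nat) (beta : R) (Y Z : nat -> T -> R) (rho pi : nat -> (T -> R) -> \bar R).
Context (budget : bool) (a : nat -> R) (cl cb : nat -> \bar R) (dp : policy R).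
Hypothesis p_ge0 : 0 <= p.
Hypothesis beta_ge0 : 0 <= beta.
Hypothesis Y_Lp : forall n, (0 < n)%N -> Lp_plus P p (Y n).
Hypothesis Z_Linf : forall n, (0 < n)%N -> Linf_plus P (Z n).
Hypothesis pi_premium : forall n, (n < N)%N -> premium_principle P p (pi n).
Hypothesis pi_Y_finite : forall n, (n < N)%N -> (pi n (Y n.+1) < +oo)%E.
Hypothesis rho_risk : forall n, (n < N)%N -> risk_measure P p (rho n).
Hypothesis rho_Y_finite : forall n, (n < N)%N -> forall lam : R, 0 <= lam ->
  (rho n (fun w => (lam * Y n.+1 w)%R) < +oo)%E.
Hypothesis a_last : a N.-1 = 1.
Hypothesis a_rec : forall n, (n.+1 < N)%N -> a n = 1 + beta * a n.+1.
Hypothesis cl_last : cl N.-1 = ess_sup P (fun w => (Z N w)%:E).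
Hypothesis cl_rec : forall n, (n.+1 < N)%N ->
  cl n = ((1 + beta * a n.+1)%R%:E * ess_sup P (fun w => (Z n.+1 w)%:E)
          + beta%:E * cl n.+1)%E.
Hypothesis cb_last : cb N.-1 = (rho N.-1 (Y N) + pi N.-1 (Y N))%E.
Hypothesis cb_rec : forall n, (n.+1 < N)%N ->
  cb n = (rho n (fun w => ((1 + beta * a n.+1) * Y n.+1 w)%R)
          + (1 + beta * a n.+1)%R%:E * pi n (Y n.+1) + beta%:E * cb n.+1)%E.
Hypothesis dp_admissible : admissible_policy pi Y budget N dp.
Hypothesis Varg_measurable : forall n h x, (n < N)%N -> valid_hist pi Y budget n h ->
  measurable_fun setT (Varg rho pi Y Z beta dp N n h x).

Local Notation V := (Vpol rho pi Y Z beta dp N).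

(* The coefficients extended by 0 at the horizon, where V_N = 0. *)
Definition a_ext (m : nat) : R := if (m < N)%N then a m else 0.
Definition cl_ext (m : nat) : \bar R := if (m < N)%N then cl m else 0%E.
Definition cb_ext (m : nat) : \bar R := if (m < N)%N then cb m else 0%E.

Lemma last_stage n : (n < N)%N -> ~~ (n.+1 < N)%N -> N.-1 = n /\ N = n.+1.
Proof.
move=> nN; rewrite -leqNgt => Nn.
by have -> : N = n.+1 by apply/eqP; rewrite eqn_leq Nn nN.
Qed.

(* With the extension, the last stage obeys the general recursion. *)
Lemma a_recursion n : (n < N)%N -> a n = 1 + beta * a_ext n.+1.
Proof.
move=> nN; rewrite /a_ext; case: ifP => [n1N|/negbT n1N]; first exact: a_rec.
by have [<- _] := last_stage nN n1N; rewrite a_last mulr0 addr0.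
Qed.

Lemma cl_recursion n : (n < N)%N ->
  cl n = ((1 + beta * a_ext n.+1)%R%:E * ess_sup P (fun w => (Z n.+1 w)%:E)
          + beta%:E * cl_ext n.+1)%E.
Proof.
move=> nN; rewrite /a_ext /cl_ext; case: ifP => [n1N|/negbT n1N]; first exact: cl_rec.
have [eN1 eN] := last_stage nN n1N.
by rewrite -eN1 cl_last eN mulr0 addr0 mul1e mule0 adde0.
Qed.

Lemma cb_recursion n : (n < N)%N ->
  cb n = (rho n (fun w => ((1 + beta * a_ext n.+1) * Y n.+1 w)%R)
          + (1 + beta * a_ext n.+1)%R%:E * pi n (Y n.+1) + beta%:E * cb_ext n.+1)%E.
Proof.
move=> nN; rewrite /a_ext /cb_ext; case: ifP => [n1N|/negbT n1N]; first exact: cb_rec.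
have [eN1 eN] := last_stage nN n1N.
rewrite -eN1 cb_last eN mulr0 addr0 mul1e mule0 adde0.
by congr (rho _ _ + _)%E; apply: funext => w; rewrite mul1r.
Qed.

Definition stage_bounded (m : nat) : Prop :=
  0 <= a_ext m /\ exists L U : R, [/\ cl_ext m = L%:E, cb_ext m = U%:E &
    forall h x, valid_hist pi Y budget m h ->
      ((- L - a_ext m * Num.max x 0)%:E <= V m h x)%E /\
      (V m h x <= (U + a_ext m * Num.max (- x) 0)%:E)%E].

Lemma stage_bounded_horizon : stage_bounded N.
Proof.
rewrite /stage_bounded /a_ext /cl_ext /cb_ext ltnn; split => //; exists 0, 0; split => //.
by move=> h x _; rewrite /Vpol subnn /= !mul0r subr0 oppr0 addr0.
Qed.

Lemma continuation_bounds n (L U : R) h x : (n < N)%N ->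
  valid_hist pi Y budget n h ->
  (forall h' x', valid_hist pi Y budget n.+1 h' ->
     ((- L - a_ext n.+1 * Num.max x' 0)%:E <= V n.+1 h' x')%E /\
     (V n.+1 h' x' <= (U + a_ext n.+1 * Num.max (- x') 0)%:E)%E) ->
  forall x', - (beta * L) - beta * a_ext n.+1 * Num.max x' 0
     <= beta * fine (V n.+1 (rcons h (x, dp n h x)) x')
     <= beta * U + beta * a_ext n.+1 * Num.max (- x') 0.
Proof.
move=> nN vh bnd x'.
have [lo up] := bnd _ x' (valid_rcons vh (dp_admissible x nN vh)).
have /andP[Vlo Vup] := fine_between lo up.
by rewrite -!mulrA -mulrN -mulrBr -mulrDr !ler_wpM2l.
Qed.

(* The backward induction step: the argument [Varg] of rho_n is, by
   definition, a [one_step_loss], so the one-step bound with A = beta a_{n+1}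
   applies. *)
Lemma stage_bounded_step n : (n < N)%N -> stage_bounded n.+1 -> stage_bounded n.
Proof.
move=> nN [a1_ge0 [L [U [eL eU bnd]]]].
set A := beta * a_ext n.+1.
have A_ge0 : 0 <= A by rewrite mulr_ge0.
have A1_ge0 : 0 <= 1 + A by lra.
have LY := Y_Lp (ltn0Sn n); have LZ := Z_Linf (ltn0Sn n).
have [M [eM ZM]] := ess_sup_real LZ.
have [pY epY] := premium_real (pi_premium nN) LY (pi_Y_finite nN).
have [r er] :=
  risk_measure_scaled_real p_ge0 (rho_risk nN) LY A1_ge0 (rho_Y_finite nN A1_ge0).
have ea : a_ext n = 1 + A by rewrite /a_ext nN a_recursion.
rewrite /stage_bounded ea; split => //.
exists ((1 + A) * M + beta * L), (r + (1 + A) * pY + beta * U); split.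
- by rewrite /cl_ext nN cl_recursion // eM eL -!EFinM -EFinD.
- by rewrite /cb_ext nN cb_recursion // er epY eU -!EFinM -!EFinD.
move=> h x vh.
have [f_inF _] := dp_admissible x nN vh.
have c_bnd := premium_ceded_bounds p_ge0 (pi_premium nN) LY f_inF epY.
have [_ _ Z0] := LZ.
have [lo up] := one_step_bound p_ge0 (rho_risk nN) LY Z0 ZM f_inF c_bnd A_ge0
  (continuation_bounds x nN vh bnd) (Varg_measurable x nN vh).
rewrite Vpol_unfold //; split; first exact: lo.
by rewrite er -EFinD !addrA in up.
Qed.

Lemma stage_bounded_all n : (n <= N)%N -> stage_bounded n.
Proof.
move=> nN; have [k kN ->] : exists2 k, (k <= N)%N & n = (N - k)%N.
  by exists (N - n)%N; rewrite ?leq_subr // subKn.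
elim: k kN => [|k IH] kN; first by rewrite subn0; exact: stage_bounded_horizon.
have Nk_pos : (0 < N - k)%N by rewrite subn_gt0.
rewrite subnS; apply: stage_bounded_step; first by rewrite prednK // leq_subr.
by rewrite prednK //; apply: IH; exact: ltnW.
Qed.

Lemma policy_value_bounds n h x : (n < N)%N -> valid_hist pi Y budget n h ->
  (- cl n - (a n * Num.max x 0)%R%:E <= V n h x)%E /\
  (V n h x <= cb n + (a n * Num.max (- x) 0)%R%:E)%E.
Proof.
move=> nN vh; have [_ [L [U [eL eU bnd]]]] := stage_bounded_all (ltnW nN).
move: eL eU bnd; rewrite /cl_ext /cb_ext /a_ext nN => -> -> /(_ h x vh).
by rewrite -EFinN -!EFinD.
Qed.

End Model.

Unset Implicit Arguments.

(* Theorem 3. *)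
Theorem mainTheorem3 (d : measure_display) (T : measurableType d) (R : realType)
  (P : probability T R) (p : R) (N : nat) (beta : R)
  (Y Z : nat -> T -> R)
  (rho pi : nat -> (T -> R) -> \bar R) (budget : bool)
  (a : nat -> R) (cl cb : nat -> \bar R) :
  1 <= p -> (0 < N)%N -> 0 < beta <= 1 ->
  (* claims and premium incomes *)
  (forall n, (0 < n)%N -> Lp_plus P p (Y n)) ->
  (forall n, (0 < n)%N -> Linf_plus P (Z n)) ->
  indep_seq P Y Z ->
  (* premium principles and risk measures *)
  (forall n, (n < N)%N -> premium_principle P p (pi n)) ->
  (forall n, (n < N)%N -> (pi n (Y n.+1) < +oo)%E) ->
  (forall n, (n < N)%N -> risk_measure P p (rho n)) ->
  (forall n, (n < N)%N -> forall lam : R, 0 <= lam ->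
     (rho n (fun w => (lam * Y n.+1 w)%R) < +oo)%E) ->
  (* the coefficients *)
  a N.-1 = 1 ->
  (forall n, (n.+1 < N)%N -> a n = 1 + beta * a n.+1) ->
  cl N.-1 = ess_sup P (fun w => (Z N w)%:E) ->
  (forall n, (n.+1 < N)%N ->
     cl n = ((1 + beta * a n.+1)%R%:E * ess_sup P (fun w => (Z n.+1 w)%:E)
             + beta%:E * cl n.+1)%E) ->
  cb N.-1 = (rho N.-1 (Y N) + pi N.-1 (Y N))%E ->
  (forall n, (n.+1 < N)%N ->
     cb n = (rho n (fun w => ((1 + beta * a n.+1) * Y n.+1 w)%R)
             + (1 + beta * a n.+1)%R%:E * pi n (Y n.+1) + beta%:E * cb n.+1)%E) ->
  forall dp : policy R,
  admissible_policy pi Y budget N dp ->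
  (* standing assumption: the arguments of rho_n are random variables *)
  (forall n h x, (n < N)%N -> valid_hist pi Y budget n h ->
     measurable_fun setT (Varg rho pi Y Z beta dp N n h x)) ->
  forall n (h : hist R) (x : R), (n < N)%N -> valid_hist pi Y budget n h ->
    (- cl n - (a n * Num.max x 0)%R%:E <= Vpol rho pi Y Z beta dp N n h x)%E /\
    (Vpol rho pi Y Z beta dp N n h x <= cb n + (a n * Num.max (- x) 0)%R%:E)%E.
Proof.
move=> p_ge1 _ /andP[beta_gt0 _] Y_Lp Z_Linf _ pi_premium pi_Y_finite rho_risk
  rho_Y_finite a_last a_rec cl_last cl_rec cb_last cb_rec dp dp_admissible
  Varg_measurable n h x nN vh.
have p_ge0 : 0 <= p by lra.
have beta_ge0 : 0 <= beta by lra.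
exact: (policy_value_bounds p_ge0 beta_ge0 Y_Lp Z_Linf pi_premium pi_Y_finite
  rho_risk rho_Y_finite a_last a_rec cl_last cl_rec cb_last cb_rec dp_admissible
  Varg_measurable x nN vh).
Qed.
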